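(* Let $F$ be an algebraically closed field of characteristic zero and $R$ a Rota–Baxter operator of nonzero weight $\lambda$ on $M_n(F)$. Then there exists an automorphism $\psi$ of $M_n(F)$ such that the matrix $R^{(\psi)}(1)=\psi^{-1}R\psi(1)$ is diagonal and, after possibly replacing $R$ by $\phi(R)=-R-\lambda\,\mathrm{id}$, the set of its diagonal entries equals $\{-p\lambda,(-p+1)\lambda,\dots,-\lambda,0,\lambda,\dots,q\lambda\}$ for some nonnegative integers $p,q$.
   Context: A linear operator $R$ on an algebra $A$ is a Rota–Baxter operator of weight $\lambda$ if $R(x)R(y)=R(R(x)y+xR(y)+\lambda xy)$ for all $x,y\in A$. For $\psi\in\mathrm{Aut}(A)$, $R^{(\psi)}=\psi^{-1}R\psi$ is again an RB-operator of weight $\lambda$, and so is $\phi(R)=-R-\lambda\,\mathrm{id}$. *)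

From HB Require Import structures.
From mathcomp Require Import all_boot all_order all_algebra.
Set Implicit Arguments. Unset Strict Implicit. Unset Printing Implicit Defensive.
Import Order.TTheory GRing.Theory Num.Theory.
Local Open Scope ring_scope.

(* Rota-Baxter operator of weight lam on an algebra A (R is assumed linear
   separately, via its type {linear A -> A}). *)
Definition is_RB (F : fieldType) (A : lalgType F) (lam : F) (R : A -> A) : Prop :=
  forall x y : A, R x * R y = R (R x * y + x * R y + lam *: (x * y)).

Definition phiRB (F : fieldType) (A : lmodType F) (lam : F) (R : A -> A) : A -> A :=
  fun x => - R x - lam *: x.

Definition is_alg_aut (F : fieldType) (A : lalgType F) (psi psiinv : A -> A) : Prop :=
  [/\ linear psi, monoid_morphism psi, cancel psi psiinv & cancel psiinv psi].

Definition conjRB (A : Type) (psiinv R psi : A -> A) : A -> A :=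
  fun x => psiinv (R (psi x)).

Definition diag_set_is (F : fieldType) (n : nat) (D : 'M[F]_n) (lam : F) (p q : nat) : Prop :=
  forall x : F, (exists i : 'I_n, D i i = x) <->
    (exists k : int, (- (p%:Z) <= k)%R /\ (k <= q%:Z)%R /\ x = k%:~R * lam).

(* After rescaling by lam^-1 the operator R has weight 1; put A := R 1.  The
   Rota-Baxter identity at (1, y) gives R (binom(A, k)) = binom(A, k + 1) for
   the binomial polynomials binom(X, k), hence R (f(A)) = g(A) for the
   antidifference g of f with g(0) = 0.  For the minimal polynomial m of A
   this gives g(A) = R 0 = 0, so g = h m with deg h = 1 and
   m(x) = (h m)(x + 1) - (h m)(x).  This difference equation forces the roots
   of m to be simple and to form a string a, a + 1, ..., a + K, and
   (h m)(0) = 0 puts 0 or -1 on it.  So A is diagonalizable with an integer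
   interval of eigenvalues containing 0, or containing -1; in the latter case
   x |-> -x - 1, the effect of phi, moves the interval onto one containing 0. *)

From HB Require Import structures.
From mathcomp Require Import all_boot all_order all_algebra.
From mathcomp Require Import separable ring zify.
Import GRing.Theory.
Local Open Scope ring_scope.

Set Implicit Arguments.
Unset Strict Implicit.
Unset Printing Implicit Defensive.

Section ForwardDifference.

Variable F : fieldType.
Implicit Types (p q : {poly F}) (c x : F).

Definition fdiff p := p \Po ('X + 1) - p.

Lemma horner_fdiff p x : (fdiff p).[x] = p.[x + 1] - p.[x].
Proof. by rewrite /fdiff hornerD hornerN horner_comp !hornerE. Qed.

Lemma fdiffD p q : fdiff (p + q) = fdiff p + fdiff q.
Proof. by rewrite /fdiff comp_polyD; ring. Qed.

Lemma fdiffZ c p : fdiff (c *: p) = c *: fdiff p.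
Proof. by rewrite /fdiff comp_polyZ scalerBr. Qed.

Lemma fdiff_mulXsubC p c :
  fdiff (p * ('X - c%:P)) = fdiff p * ('X + 1 - c%:P) + p.
Proof. by rewrite /fdiff comp_polyM comp_polyB comp_polyX comp_polyC; ring. Qed.

Lemma deriv_fdiff p : (fdiff p)^`() = fdiff p^`().
Proof. by rewrite /fdiff derivB deriv_comp derivD derivX derivC addr0 mulr1. Qed.

Lemma size_fdiff p : (size (fdiff p) <= (size p).-1)%N.
Proof.
have sX1 : size ('X + 1 : {poly F}) = 2 by rewrite size_XaddC.
have lead_comp : lead_coef (p \Po ('X + 1)) = lead_coef p.
  by rewrite lead_coef_comp ?sX1 // lead_coefXaddC expr1n mulr1.
apply/leq_sizeP => j le_j; rewrite /fdiff coefB.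
have [lt_j|ge_j] := ltnP (size p).-1 j.
  by rewrite !nth_default ?subrr ?size_comp_poly2 //; case: (size p) lt_j.
have -> : j = (size p).-1 by apply/eqP; rewrite eqn_leq le_j ge_j.
by move: lead_comp; rewrite /lead_coef size_comp_poly2 // => ->; rewrite subrr.
Qed.

End ForwardDifference.

Section CharacteristicZero.

Variables (F : fieldType) (charF0 : [pchar F] =i pred0).

Lemma natrS_neq0 k : k.+1%:R != 0 :> F.
Proof. by move/pcharf0P: charF0 => ->. Qed.

Lemma natr_inj : injective (fun k : nat => k%:R : F).
Proof.
move=> i j /= eq_ij; move/pcharf0P: charF0 => char0.
wlog le_ij : i j eq_ij / (i <= j)%N.
  by move=> W; case: (leqP i j) => [|/ltnW] /W->.
have : (j - i)%:R == 0 :> F by rewrite natrB // eq_ij subrr.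
by rewrite char0 subn_eq0 => le_ji; apply/eqP; rewrite eqn_leq le_ij.
Qed.

Lemma arith_prog_roots (p : {poly F}) (x s : F) (N : nat) :
  p != 0 -> s != 0 -> (forall j, (j < N)%N -> root p (x + s * j%:R)) ->
  (N < size p)%N.
Proof.
move=> p_neq0 s_neq0 roots_p.
have := max_poly_roots p_neq0 (rs := [seq x + s * j%:R | j <- iota 0 N]).
rewrite size_map size_iota; apply.
  by apply/allP => y /mapP[j]; rewrite mem_iota add0n => /roots_p + ->.
rewrite map_inj_uniq ?iota_uniq // => i j /addrI /(mulfI s_neq0).
exact: natr_inj.
Qed.

End CharacteristicZero.

HB.lock Definition binpoly (F : fieldType) (k : nat) : {poly F} :=
  k`!%:R^-1 *: \prod_(i < k) ('X - i%:R%:P).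

Section BinomialPolynomials.

Variables (F : fieldType) (charF0 : [pchar F] =i pred0).
Lemma binpoly0 : binpoly F 0 = 1.
Proof. by rewrite binpoly.unlock big_ord0 invr1 scale1r. Qed.

Lemma binpolyS k : k.+1%:R *: binpoly F k.+1 = binpoly F k * ('X - k%:R%:P).
Proof.
rewrite binpoly.unlock big_ord_recr /= factS natrM invfM scalerA mulrA.
by rewrite mulfV ?(natrS_neq0 charF0) // mul1r -scalerAl.
Qed.

Lemma binpoly1 : binpoly F 1 = 'X.
Proof. by rewrite -[binpoly F 1]scale1r (binpolyS 0) binpoly0 mul1r subr0. Qed.

Lemma mulX_binpoly k :
  'X * binpoly F k = k.+1%:R *: binpoly F k.+1 + k%:R *: binpoly F k.
Proof. by rewrite binpolyS -mul_polyC; ring. Qed.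

Lemma size_binpoly k : size (binpoly F k) = k.+1.
Proof.
elim: k => [|k IHk]; first by rewrite binpoly0 size_poly1.
have Bk_neq0 : binpoly F k != 0 by rewrite -size_poly_eq0 IHk.
rewrite -(size_scale _ (natrS_neq0 charF0 k)) binpolyS.
by rewrite size_mul ?polyXsubC_eq0 // IHk size_XsubC addn2.
Qed.

Lemma horner_binpolyS_0 k : (binpoly F k.+1).[0] = 0.
Proof.
by rewrite binpoly.unlock big_ord_recl hornerZ hornerM hornerXsubC subrr mul0r mulr0.
Qed.

Lemma fdiff_binpolyS k : fdiff (binpoly F k.+1) = binpoly F k.
Proof.
elim: k => [|k IHk].
  by rewrite binpoly1 binpoly0 /fdiff comp_polyX addrAC subrr add0r.
apply: (scalerI (natrS_neq0 charF0 k.+1)); rewrite -fdiffZ binpolyS fdiff_mulXsubC.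
have -> : 'X + 1 - k.+1%:R%:P = 'X - k%:R%:P :> {poly F}.
  by rewrite -natr1 polyCD polyC1; ring.
by rewrite IHk -binpolyS -[k.+2%:R]natr1 scalerDl scale1r.
Qed.

End BinomialPolynomials.

Lemma is_RB_scale (F : fieldType) (A : algType F) (lam : F) (R : {linear A -> A}) :
  lam != 0 -> is_RB lam R -> is_RB 1 (lam^-1 \*: R).
Proof.
move=> lam_neq0 hR x y /=.
have -> : lam^-1 *: R x * y + x * (lam^-1 *: R y) + 1 *: (x * y) =
    lam^-1 *: (R x * y + x * R y + lam *: (x * y)).
  by rewrite !scalerDr scalerA mulVf // -scalerAl -scalerAr scale1r.
by rewrite -scalerAl -scalerAr scalerA hR linearZ /= scalerA.
Qed.

Section WeightOneRotaBaxter.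

Variables (F : fieldType) (charF0 : [pchar F] =i pred0).
Variables (A : algType F) (R : {linear A -> A}).
Hypothesis RB1 : is_RB 1 R.

Local Notation a := (R 1).
Local Notation ev := (horner_alg a).

Let evD p q : ev (p + q) = ev p + ev q.
Proof. exact: rmorphD. Qed.

Let evZ c p : ev (c *: p) = c *: ev p.
Proof. by rewrite linearZ /= mulr_algl. Qed.

Let evX p : a * ev p = ev ('X * p).
Proof. by rewrite rmorphM /= /horner_alg horner_morphX. Qed.

Lemma RB1_binpoly k : R (ev (binpoly F k)) = ev (binpoly F k.+1).
Proof.
elim: k => [|k IHk].
  by rewrite binpoly0 rmorph1 (binpoly1 charF0) /horner_alg horner_morphX.
have := RB1 1 (ev (binpoly F k)); rewrite IHk !mul1r scale1r !evX -!evD.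
have -> : 'X * binpoly F k + binpoly F k.+1 + binpoly F k =
    k.+2%:R *: binpoly F k.+1 + k.+1%:R *: binpoly F k.
  rewrite (mulX_binpoly charF0) -[k.+2%:R]natr1 -[k.+1%:R]natr1.
  by rewrite !scalerDl !scale1r; ring.
rewrite (mulX_binpoly charF0) !evD !evZ linearD !linearZ IHk.
by move/addIr/(scalerI (natrS_neq0 charF0 _)).
Qed.

Lemma RB1_horner_antidiff f : exists g : {poly F},
  [/\ fdiff g = f, g.[0] = 0, (size g <= (size f).+1)%N & R (ev f) = ev g].
Proof.
move: {2}(size f) (leqnn (size f)) => N; elim: N f => [|N IHN] f le_f_N.
  move: le_f_N; rewrite size_poly_leq0 => /eqP->.
  exists 0; split; rewrite ?size_poly0 ?horner0 ?rmorph0 ?linear0 //.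
  by rewrite /fdiff comp_poly0 subrr.
have [/IHN[g [Dg g0 sg Rg]]|gt_f_N] := leqP (size f) N; first by exists g.
have sf : size f = N.+1 by apply/eqP; rewrite eqn_leq le_f_N.
have lcB : lead_coef (binpoly F N) != 0.
  by rewrite lead_coef_eq0 -size_poly_gt0 size_binpoly.
pose c := lead_coef f / lead_coef (binpoly F N).
have size_rest : (size (f - c *: binpoly F N)%R <= N)%N.
  apply/leq_sizeP => j le_N_j; rewrite coefB coefZ.
  have [lt_N_j|ge_N_j] := ltnP N j.
    by rewrite !nth_default ?mulr0 ?subr0 ?sf ?size_binpoly.
  have -> : j = N by apply/eqP; rewrite eqn_leq le_N_j ge_N_j.
  have lcf : f`_N = lead_coef f by rewrite lead_coefE sf.
  have lcB' : (binpoly F N)`_N = lead_coef (binpoly F N).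
    by rewrite lead_coefE size_binpoly.
  by rewrite lcf lcB' mulfVK // subrr.
have [g [Dg g0 sg Rg]] := IHN _ size_rest.
have Rf : R (ev f) = ev g + c *: ev (binpoly F N.+1).
  by rewrite -RB1_binpoly -Rg -linearZ -linearD -evZ -evD subrK.
exists (g + c *: binpoly F N.+1); split.
- by rewrite fdiffD fdiffZ (fdiff_binpolyS charF0) Dg subrK.
- by rewrite hornerD hornerZ horner_binpolyS_0 g0 mulr0 addr0.
- rewrite (leq_trans (size_polyD _ _)) // geq_max sf.
  rewrite (leq_trans sg) ?ltnS ?(leq_trans size_rest) //=.
  by rewrite (leq_trans (size_scale_leq _ _)) // size_binpoly.
- by rewrite Rf evD evZ.
Qed.

End WeightOneRotaBaxter.

Lemma size_cofactor_fdiff (F : fieldType) (m h : {poly F}) :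
  (1 < size m)%N -> fdiff (h * m) = m -> (size (h * m)%R <= (size m).+1)%N ->
  size h = 2%N.
Proof.
move=> sm hm s_hm.
have m_neq0 : m != 0 by rewrite -size_poly_gt0 (ltn_trans _ sm).
have h_neq0 : h != 0.
  by apply: contra_eqN hm => /eqP->; rewrite mul0r /fdiff comp_poly0 subrr eq_sym.
move: s_hm; rewrite size_mul // => s_hm.
have [lt2h|] := ltnP 2 (size h).
  by move: s_hm; rewrite -(ltn_predK sm) -(subnKC lt2h); lia.
rewrite leq_eqVlt ltnS => /orP[/eqP//|/size1_polyC hC].
have := size_fdiff (h * m); rewrite hm hC mul_polyC size_scale.
  by rewrite -(ltn_predK sm) ltnn.
by apply: contraNneq h_neq0 => c0; rewrite hC c0.
Qed.

Section DifferenceEquation.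

Variables (F : closedFieldType) (charF0 : [pchar F] =i pred0).
Variables (m h : {poly F}).
Hypotheses (sm : (1 < size m)%N) (sh : size h = 2%N) (hm : fdiff (h * m) = m).

Let m_neq0 : m != 0.
Proof. by rewrite -size_poly_gt0 (ltn_trans _ sm). Qed.

Local Notation c := h`_1.
Local Notation d := h`_0.

Lemma lead_cofactor_neq0 : c != 0.
Proof.
have : lead_coef h != 0 by rewrite lead_coef_eq0 -size_poly_gt0 sh.
by rewrite lead_coefE sh.
Qed.

Lemma horner_cofactor x : h.[x] = d + c * x.
Proof.
by rewrite horner_coef sh !big_ord_recl big_ord0 /= expr0 expr1 mulr1 addr0 mulrC.
Qed.

(* [u] is the zero of [1 + h]: descending from any root of [m] in steps of 1
   can only stop at [u + 1]. *)
Let u := (-1 - d) / c.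

Lemma cofactor_addr1_eq0 x : (1 + h.[x] == 0) = (x == u).
Proof.
have c_neq0 := lead_cofactor_neq0.
rewrite horner_cofactor /u; move: c_neq0; set c' := c; set d' := d => c_neq0.
apply/eqP/eqP => [e|->]; last by field.
have cx : c' * x = -1 - d' by rewrite -[RHS]addr0 -e; ring.
by rewrite -cx mulrC mulKf.
Qed.

Lemma fdiff_eq_horner x : (1 + h.[x]) * m.[x] = h.[x + 1] * m.[x + 1].
Proof.
have := congr1 (horner^~ x) hm; rewrite /= horner_fdiff !hornerM => e.
by rewrite mulrDl mul1r -{1}e; ring.
Qed.

Lemma fdiff_eq_horner_deriv x :
  c * m.[x] + (1 + h.[x]) * m^`().[x] = c * m.[x + 1] + h.[x + 1] * m^`().[x + 1].
Proof.
have h' : h^`() = c%:P.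
  apply/polyP => i; rewrite coef_deriv coefC.
  case: i => [|i] /=; first by rewrite mulr1n.
  by rewrite nth_default ?mul0rn // sh.
have := congr1 (fun p => p^`().[x]) hm.
rewrite /= deriv_fdiff horner_fdiff derivM h' !hornerE => e.
by rewrite mulrDl mul1r -{1}e; ring.
Qed.

Lemma root_subr1 r : root m r -> r - 1 != u -> root m (r - 1).
Proof.
move=> /eqP mr; rewrite -cofactor_addr1_eq0 => hr; apply/eqP.
have := fdiff_eq_horner (r - 1); rewrite subrK mr mulr0.
by move/eqP; rewrite mulf_eq0 (negPf hr) => /eqP.
Qed.

Lemma string_neq_base k : u + 1 + k%:R != u.
Proof.
rewrite -subr_eq0 (_ : _ - u = k.+1%:R) ?(natrS_neq0 charF0) //.
by rewrite -natr1; ring.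
Qed.

Lemma root_string r : root m r -> exists k, r = u + 1 + k%:R.
Proof.
move=> mr; pose N := size m.
have [k /eqP->|no_k] := pickP (fun k : 'I_N => r == u + 1 + k%:R); first by exists k.
have roots_down j : (j <= N)%N -> root m (r + -1 * j%:R).
  elim: j => [|j IHj] le_jN; first by rewrite mulr0 addr0.
  rewrite -natr1 mulrDr mulN1r addrA mulN1r; apply: root_subr1.
    by rewrite -mulN1r; apply: IHj; apply: ltnW.
  apply: contraFneq (no_k (Ordinal le_jN)) => /= <-.
  by rewrite subrK subrK.
have neg1_neq0 : -1 != 0 :> F by rewrite oppr_eq0 oner_eq0.
have /ltnW := arith_prog_roots charF0 (N := N.+1) m_neq0 neg1_neq0 roots_down.
by rewrite ltnn.
Qed.

Lemma root_string_le k j :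
  root m (u + 1 + k%:R) -> (j <= k)%N -> root m (u + 1 + j%:R).
Proof.
elim: k => [|k IHk] mk; first by rewrite leqn0 => /eqP->.
rewrite leq_eqVlt ltnS => /orP[/eqP->//|]; apply: IHk.
have -> : u + 1 + k%:R = u + 1 + k.+1%:R - 1 by rewrite -natr1; ring.
by apply: root_subr1 mk _; rewrite -natr1 addrA addrK string_neq_base.
Qed.

Lemma root_string_lt_size k : root m (u + 1 + k%:R) -> (k < size m)%N.
Proof.
move=> mk; apply/ltnW/(arith_prog_roots charF0 m_neq0 (oner_neq0 F)) => j.
by rewrite mul1r ltnS; apply: root_string_le.
Qed.

Lemma roots_string :
  exists a K, forall x, root m x <-> exists2 j, (j <= K)%N & x = a + j%:R.
Proof.
have [r0 mr0] : exists r, root m r.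
  by apply/closed_rootP; rewrite neq_ltn sm orbT.
have [k0 r0E] := root_string mr0.
have exP : exists k, root m (u + 1 + k%:R) by exists k0; rewrite -r0E.
have ubP k : root m (u + 1 + k%:R) -> (k <= size m)%N.
  by move/root_string_lt_size/ltnW.
have [K mK maxK] := ex_maxnP exP ubP.
exists (u + 1), K => x; split=> [mx|[j le_jK ->]]; last exact: root_string_le mK le_jK.
by have [j xE] := root_string mx; exists j => //; apply: maxK; rewrite -xE.
Qed.

Lemma root_string_simple k : root m (u + 1 + k%:R) -> m^`().[u + 1 + k%:R] != 0.
Proof.
have c_neq0 := lead_cofactor_neq0.
elim: k => [|k IHk] mk; apply/eqP => m'k.
  have := fdiff_eq_horner_deriv u; move: mk m'k; rewrite addr0 => /eqP-> ->.
  have /eqP-> : 1 + h.[u] == 0 by rewrite cofactor_addr1_eq0.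
  rewrite !mulr0 mul0r !addr0 => /eqP; rewrite mulf_eq0 (negPf c_neq0) /=.
  move=> /root_string[j /eqP]; apply/negP.
  by rewrite eq_sym string_neq_base.
have mk' := root_string_le mk (leqnSn k).
have := fdiff_eq_horner_deriv (u + 1 + k%:R).
have -> : u + 1 + k%:R + 1 = u + 1 + k.+1%:R by rewrite -natr1 addrA.
rewrite m'k (eqP mk) (eqP mk') !mulr0 add0r addr0.
move/eqP; rewrite mulf_eq0 cofactor_addr1_eq0 (negPf (string_neq_base k)) /=.
exact/negP/IHk.
Qed.

Lemma root_simple r : root m r -> m^`().[r] != 0.
Proof.
by move=> mr; have [k rE] := root_string mr; rewrite rE; apply: root_string_simple; rewrite -rE.
Qed.

Lemma root0_or_rootN1 : (h * m).[0] = 0 -> root m 0 \/ root m (-1).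
Proof.
have [a [K rootsE]] := roots_string.
pose x := a + K%:R.
have mx : root m x by apply/rootsE; exists K.
have nmx1 : ~~ root m (x + 1).
  apply/negP => /rootsE[j le_jK]; rewrite /x -addrA natr1 => /addrI /natr_inj.
  by move=> /(_ charF0) KE; move: le_jK; rewrite -KE ltnn.
have hx1 : h.[x + 1] = 0.
  move: (fdiff_eq_horner x); rewrite (eqP mx) mulr0 => /esym/eqP.
  by rewrite mulf_eq0 (negPf (nmx1 : m.[x + 1] != 0)) orbF => /eqP.
rewrite hornerM => /eqP; rewrite mulf_eq0 => /orP[/eqP h0|]; last by left.
right; suff -> : -1 = x by [].
move: hx1 h0; rewrite !horner_cofactor mulr0 addr0 => + d0.
rewrite d0 add0r => /eqP; rewrite mulf_eq0 (negPf lead_cofactor_neq0) addr_eq0.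
by move=> /eqP->.
Qed.

End DifferenceEquation.

Lemma string_int_range (R : pzRingType) (a : R) (K j0 : nat) :
  (j0 <= K)%N -> a + j0%:R = 0 -> forall x,
  (exists2 j, (j <= K)%N & x = a + j%:R) <->
  (exists k : int, (- j0%:Z <= k) /\ (k <= (K - j0)%N%:Z) /\ x = k%:~R).
Proof.
move=> le_j0K /eqP; rewrite addr_eq0 => /eqP-> x; split.
  move=> [j le_jK ->]; exists (j%:Z - j0%:Z); split; [lia | split; first lia].
  by rewrite intrB addrC.
move=> [k [ge_k [le_k ->]]]; pose j := absz (k + j0%:Z).
have jE : j%:Z = k + j0%:Z by rewrite gez0_abs; lia.
exists j; first lia.
by rewrite -[k](addrK j0%:Z) -jE intrB addrC.
Qed.

Lemma string_opp_sub1 (R : comPzRingType) (a : R) (K : nat) y :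
  (exists2 j, (j <= K)%N & - y - 1 = a + j%:R) <->
  (exists2 j, (j <= K)%N & y = - a - 1 - K%:R + j%:R).
Proof.
split=> [[j le_jK yE] | [j le_jK ->]]; exists (K - j)%N; rewrite ?leq_subr //.
  by rewrite natrB // -[y]opprK -[- y](subrK 1) yE; ring.
by rewrite natrB //; ring.
Qed.

Lemma diag_set_is_scale (F : fieldType) (n : nat) (D : 'M[F]_n) (lam : F) (p q : nat) :
  (forall x, (exists i, D i i = x) <->
     (exists k : int, (- p%:Z <= k) /\ (k <= q%:Z) /\ x = k%:~R)) ->
  diag_set_is (lam *: D) lam p q.
Proof.
move=> diagD x; split=> [[i <-] | [k [ge_k [le_k ->]]]].
  have [k [ge_k [le_k Dk]]] := (diagD (D i i)).1 (ex_intro _ i erefl).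
  by exists k; rewrite mxE Dk mulrC.
have [i Di] := (diagD k%:~R).2 (ex_intro _ k (conj ge_k (conj le_k erefl))).
by exists i; rewrite mxE Di mulrC.
Qed.

Lemma diag_set_is_string (F : fieldType) (n : nat) (D : 'M[F]_n)
    (lam a : F) (K j0 : nat) :
  (forall x, (exists i, D i i = x) <-> exists2 j, (j <= K)%N & x = a + j%:R) ->
  (j0 <= K)%N -> a + j0%:R = 0 -> diag_set_is (lam *: D) lam j0 (K - j0).
Proof.
move=> diagD le_j0K a0; apply: diag_set_is_scale => x.
by rewrite diagD; apply: string_int_range.
Qed.

(* [phiRB lam] turns an eigenvalue [lam x] of [R 1] into [lam (- x - 1)]. *)
Lemma diag_set_is_string_opp_sub1 (F : fieldType) (n : nat) (D : 'M[F]_n)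
    (lam a : F) (K j0 : nat) :
  (forall x, (exists i, D i i = x) <-> exists2 j, (j <= K)%N & x = a + j%:R) ->
  (j0 <= K)%N -> a + j0%:R = -1 -> diag_set_is (lam *: (- D - 1%:M)) lam (K - j0) j0.
Proof.
move=> diagD le_j0K aN1; apply: diag_set_is_scale => x.
have -> : (exists i, (- D - 1%:M) i i = x) <-> exists i, D i i = - x - 1.
  split=> -[i Di]; exists i; move: Di; rewrite !mxE eqxx mulr1n.
    by move=> <-; ring.
  by move=> ->; ring.
rewrite diagD string_opp_sub1 -{2}(subKn le_j0K).
apply: string_int_range; first exact: leq_subr.
by rewrite natrB // -[a](addrK j0%:R) aN1; ring.
Qed.

Lemma diagonalizable_mxminpoly_simple (F : closedFieldType) (n : nat) (A : 'M[F]_n.+1) :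
  (forall r, root (mxminpoly A) r -> (mxminpoly A)^`().[r] != 0) -> diagonalizable A.
Proof.
move=> simple; apply/diagonalizableP.
have [zs mE] := closed_field_poly_normal (mxminpoly A).
rewrite (monicP (mxminpoly_monic A)) scale1r in mE.
exists zs; last by rewrite -mE.
rewrite -separable_prod_XsubC -mE.
by rewrite unlock; apply/Pdiv.ClosedField.root_coprimep.
Qed.

Lemma root_mxminpoly_diag (F : fieldType) (n : nat) (P A : 'M[F]_n.+1) :
  P \in unitmx -> diagonalizable_for P A ->
  forall x, root (mxminpoly A) x <-> exists i, conjmx P A i i = x.
Proof.
move=> Punit PAdiag x; rewrite (diagonalizable_for_mxminpoly Punit PAdiag).
rewrite root_prod_XsubC mem_undup; split=> [/mapP[i _ ->] | [i <-]].
  by exists i.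
by apply/mapP; exists i; rewrite ?mem_enum.
Qed.

Lemma is_alg_aut_conjmx (F : fieldType) (n : nat) (P : 'M[F]_n.+1) :
  P \in unitmx -> is_alg_aut (conjmx (invmx P)) (conjmx P).
Proof.
move=> Punit; split.
- by move=> c x y; rewrite /conjmx mulmxDr mulmxDl -!scalemxAr -!scalemxAl.
- split; first by rewrite conjmx_scalar ?row_free_unit ?unitmx_inv.
  by move=> x y; rewrite -!mulmxE conjmxM // !inE stablemx_unit ?unitmx_inv.
- by move=> x; rewrite conjmxVK.
- by move=> x; rewrite conjmxK.
Qed.

Lemma conjmxZ (F : fieldType) (m n : nat) (V : 'M[F]_(m, n)) (c : F) (X : 'M[F]_n) :
  conjmx V (c *: X) = c *: conjmx V X.
Proof. by rewrite /conjmx -scalemxAr -scalemxAl. Qed.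

Lemma conjRB_conjmx (F : fieldType) (n : nat) (P : 'M[F]_n.+1) (S : 'M_n.+1 -> 'M_n.+1) :
  P \in unitmx -> conjRB (conjmx P) S (conjmx (invmx P)) 1 = conjmx P (S 1).
Proof. by move=> Punit; rewrite /conjRB conjmx_scalar ?row_free_unit ?unitmx_inv. Qed.

Lemma RB1_mxminpoly_roots (F : closedFieldType) (charF0 : [pchar F] =i pred0) (n : nat)
    (R : {linear 'M[F]_n.+1 -> 'M[F]_n.+1}) : is_RB 1 R ->
  let m := mxminpoly (R 1) in
  (forall r, root m r -> m^`().[r] != 0) /\
  exists (a : F) (K : nat),
    (forall x, root m x <-> exists2 j, (j <= K)%N & x = a + j%:R) /\
    (root m 0 \/ root m (-1)).
Proof.
move=> hR m.
have evE p : horner_alg (R 1) p = horner_mx (R 1) p.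
  by rewrite (poly_alg_initial (horner_mx (R 1))) /= horner_mx_X.
have [g [Dg g0 sg Rm]] := RB1_horner_antidiff charF0 hR m.
have /dvdpP[h gE] : m %| g.
  by apply: mxminpoly_min; rewrite -evE -Rm evE mx_root_minpoly linear0.
have sm : (1 < size m)%N by rewrite size_mxminpoly ltnS mxminpoly_nonconstant.
rewrite gE in Dg g0 sg.
have sh := size_cofactor_fdiff sm Dg sg.
split=> [r mr|]; first exact: (root_simple charF0 sm sh Dg mr).
have [a [K rootsE]] := roots_string charF0 sm sh Dg.
exists a, K; split; first exact: rootsE.
by have := root0_or_rootN1 charF0 sm sh Dg g0.
Qed.

Theorem theorem11 (F : closedFieldType) (charF0 : [pchar F] =i pred0)
    (n : nat) (lam : F) (lam_neq0 : lam != 0)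
    (R : {linear 'M[F]_n.+1 -> 'M[F]_n.+1}) (hR : is_RB lam R) :
  exists (psi psiinv : 'M[F]_n.+1 -> 'M[F]_n.+1),
    is_alg_aut psi psiinv /\
    is_diag_mx (conjRB psiinv R psi 1) /\
    exists p q : nat,
      diag_set_is (conjRB psiinv R psi 1) lam p q \/
      diag_set_is (conjRB psiinv (phiRB lam R) psi 1) lam p q.
Proof.
have [simple [a [K [rootsE root0_or_N1]]]] :=
  RB1_mxminpoly_roots charF0 (is_RB_scale lam_neq0 hR).
have [P Punit PAdiag] := diagonalizable_mxminpoly_simple simple.
have diagE := root_mxminpoly_diag Punit PAdiag; set D := conjmx P _ in diagE.
have diagD x : (exists i, D i i = x) <-> exists2 j, (j <= K)%N & x = a + j%:R.
  by rewrite -diagE rootsE.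
have R1E : R 1 = lam *: (lam^-1 \*: R) 1 by rewrite /= scalerA mulfV // scale1r.
have conjR : conjRB (conjmx P) R (conjmx (invmx P)) 1 = lam *: D.
  by rewrite conjRB_conjmx // R1E conjmxZ.
have conjphiR : conjRB (conjmx P) (phiRB lam R) (conjmx (invmx P)) 1 =
    lam *: (- D - 1%:M).
  have Pfree : row_free P by rewrite row_free_unit.
  rewrite conjRB_conjmx // /phiRB R1E -scalerN -scalerBr conjmxZ.
  by rewrite -[in RHS](conjmx_scalar 1 Pfree) /conjmx mulmxBr mulmxBl mulmxN mulNmx.
exists (conjmx (invmx P)), (conjmx P); split; first exact: is_alg_aut_conjmx.
split.
  rewrite conjR; apply/is_diag_mxP => i j ij.
  by move/is_diag_mxP: PAdiag => /(_ i j ij) Dij; rewrite mxE Dij mulr0.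
case: root0_or_N1 => /rootsE[j0 le_j0K aj0].
  by exists j0, (K - j0)%N; left; rewrite conjR; apply: diag_set_is_string.
by exists (K - j0)%N, j0; right; rewrite conjphiR; apply: diag_set_is_string_opp_sub1.
Qed.
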